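(* Let $a,b$ be positive integers and let $A=(a_1,\ldots,a_n)$ be a sequence of positive integers such that $a_i\in\{a,a+1\}$ for every odd $i$ and $a_i\in\{b,b+1\}$ for every even $i$. (i) If $A=(P,a,R)$ where the displayed entry $a$ sits at an odd position and $P,R$ each have length at least $2$, then $$1+\frac{1}{a+2c^{(1)}_{a,a+1;b}}\le\frac{\langle P,a+1,R\rangle}{\langle P,a,R\rangle}\le 1+\frac{1}{a+2c^{(2)}_{a,a+1;b}}.$$ (ii) If $A=(P_1,b,R_1)$ where the displayed entry $b$ sits at an even position and $P_1,R_1$ each have length at least $2$, then $$1+\frac{1}{b+2c^{(1)}_{a;b,b+1}}\le\frac{\langle P_1,b+1,R_1\rangle}{\langle P_1,b,R_1\rangle}\le 1+\frac{1}{b+2c^{(2)}_{a;b,b+1}}.$$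
   Context: The continuant $\langle a_1,\ldots,a_n\rangle$ is defined by $\langle\,\rangle=1$, $\langle a_1\rangle=a_1$, $\langle a_1,\ldots,a_n\rangle=a_n\langle a_1,\ldots,a_{n-1}\rangle+\langle a_1,\ldots,a_{n-2}\rangle$; lists inside $\langle\cdot\rangle$ denote concatenation. $[x_1,\ldots,x_k]$ denotes the finite continued fraction $\cfrac{1}{x_1+\cfrac{1}{\ddots+\cfrac1{x_k}}}$. Define $c^{(1)}_{a,a+1;b}=[b,a+1,b]$, $c^{(2)}_{a,a+1;b}=[b+1,a]$, $c^{(1)}_{a;b,b+1}=[a,b+1,a]$, $c^{(2)}_{a;b,b+1}=[a+1,b]$. *)

From mathcomp Require Import all_boot all_order all_algebra.
Set Implicit Arguments. Unset Strict Implicit. Unset Printing Implicit Defensive.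
Import Order.TTheory GRing.Theory Num.Theory.

(* continuant of a reversed list: rcont [:: a_n; a_(n-1); ...; a_1] *)
Fixpoint rcont (s : seq nat) : nat :=
  match s with
  | [::] => 1
  | [:: x] => x
  | x :: ((y :: t) as s') => x * rcont s' + rcont t
  end.

Definition continuant (s : seq nat) : nat := rcont (rev s).

Fixpoint cfrac (s : seq rat) : rat :=
  match s with
  | [::] => 0%R
  | x :: t => (1 / (x + cfrac t))%R
  end.

Local Open Scope ring_scope.
Definition c1_aa1b (a b : nat) : rat := cfrac [:: b%:R; a.+1%:R; b%:R].
Definition c2_aa1b (a b : nat) : rat := cfrac [:: b.+1%:R; a%:R].
Definition c1_abb1 (a b : nat) : rat := cfrac [:: a%:R; b.+1%:R; a%:R].
Definition c2_abb1 (a b : nat) : rat := cfrac [:: a.+1%:R; b%:R].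

(* Expanding the continuant at the entry x shows that <P, x, R> is affine in x
   with slope <P><R>, so the ratio <P, x+1, R> / <P, x, R> equals
   1 + 1 / (x + [rev P] + [R]), each continued fraction being a quotient of
   consecutive continuants.  Under the parity hypothesis the partial quotients
   of rev P and of R, read away from x, alternate between {p, p+1} and
   {q, q+1}, and any such continued fraction of length at least 2 lies
   between [p+1, q] and [p, q+1, p]. *)

From mathcomp Require Import all_boot all_order all_algebra.
From mathcomp Require Import ring lra zify.
Import Order.TTheory GRing.Theory Num.Theory.

Set Implicit Arguments.
Unset Strict Implicit.
Unset Printing Implicit Defensive.

Lemma seq_ind2 (T : Type) (P : seq T -> Prop) :
  P [::] -> (forall x, P [:: x]) ->
  (forall x y t, P (y :: t) -> P t -> P [:: x, y & t]) ->
  forall s, P s.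
Proof.
move=> P0 P1 P2 s; suff [] : P s /\ forall x, P (x :: s) by [].
by elim: s => [|y t [IHt IHyt]]; split=> // x; apply: P2.
Qed.

Lemma rcont_cons2 (x y : nat) (t : seq nat) :
  rcont [:: x, y & t] = x * rcont (y :: t) + rcont t.
Proof. by []. Qed.

Lemma rcont_cons (x : nat) (s : seq nat) :
  s != [::] -> rcont (x :: s) = x * rcont s + rcont (behead s).
Proof. by case: s. Qed.

Lemma rcont_cat (S : seq nat) (y : nat) (U : seq nat) : U != [::] ->
  rcont (rcons S y ++ U) = rcont (rcons S y) * rcont U + rcont S * rcont (behead U).
Proof.
move=> nzU; elim/seq_ind2: S y => [|x|x z t IHzt IHt] y.
- by rewrite cat_rcons cat0s rcont_cons // mul1n.
- by case: U nzU => // u U _ /=; ring.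
- by rewrite !rcons_cons !cat_cons !rcont_cons2 IHzt IHt; ring.
Qed.

Lemma rcont_rcons2 (S : seq nat) (z y : nat) :
  rcont (rcons (rcons S z) y) = y * rcont (rcons S z) + rcont S.
Proof. by have := @rcont_cat S z [:: y] isT; rewrite cats1 /= muln1 mulnC. Qed.

Lemma rcont_rev (s : seq nat) : rcont (rev s) = rcont s.
Proof.
elim/seq_ind2: s => // x y t IHyt IHt.
by rewrite [RHS]rcont_cons2 -IHyt -IHt !rev_cons rcont_rcons2.
Qed.

Lemma continuantE (s : seq nat) : continuant s = rcont s.
Proof. exact: rcont_rev. Qed.

Lemma rcont_gt0 (s : seq nat) : all (fun x => 0 < x) s -> 0 < rcont s.
Proof.
elim/seq_ind2: s => // [x|x y t IHyt _]; first by rewrite /= andbT.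
by case/andP=> x_gt0 /IHyt; rewrite rcont_cons2; nia.
Qed.

Lemma continuant_insert (P : seq nat) (p x r : nat) (R : seq nat) :
  continuant (rcons P p ++ x :: r :: R) =
  x * rcont (rcons P p) * rcont (r :: R) + rcont P * rcont (r :: R)
    + rcont (rcons P p) * rcont R.
Proof. by rewrite continuantE -cat_rcons rcont_cat // rcont_rcons2; ring. Qed.

Local Open Scope ring_scope.
Local Notation cf s := (cfrac (map (fun n : nat => n%:R) s)).

Lemma cf_cons (t : nat) (T : seq nat) : cf (t :: T) = 1 / (t%:R + cf T).
Proof. by []. Qed.

Lemma cf_rcont (t : nat) (T : seq nat) : all (fun x => 0 < x)%N (t :: T) ->
  cf (t :: T) = (rcont T)%:R / (rcont (t :: T))%:R.
Proof.
elim: T t => [|t' T IH] t; first by rewrite cf_cons addr0.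
case/andP=> t_gt0 pos_T; rewrite cf_cons IH // rcont_cons2 natrD natrM.
have c_gt0 := @rcont_gt0 (t' :: T) pos_T; set c := rcont (t' :: T).
have c_neq0 : c%:R != 0 :> rat by rewrite pnatr_eq0 -lt0n.
have den_neq0 : t%:R * c%:R + (rcont T)%:R != 0 :> rat.
  by rewrite -natrM -natrD pnatr_eq0 -lt0n; nia.
by field; rewrite c_neq0 den_neq0.
Qed.

Lemma continuant_ratio (P R : seq nat) (x : nat) : P != [::] -> R != [::] ->
  all (fun y => 0 < y)%N P -> all (fun y => 0 < y)%N R ->
  (continuant (P ++ x.+1 :: R))%:R / (continuant (P ++ x :: R))%:R
    = 1 + 1 / (x%:R + cf (rev P) + cf R) :> rat.
Proof.
case/lastP: P => [//|P p] _; case: R => [//|r R] _.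
rewrite all_rcons => /andP[p_gt0 pos_P] pos_R.
have pos_revP : all (fun y => 0 < y)%N (p :: rev P) by rewrite /= all_rev p_gt0.
rewrite !continuant_insert rev_rcons (cf_rcont pos_revP) (cf_rcont pos_R).
rewrite -rev_rcons !rcont_rev.
have cP_gt0 : (0 < rcont (rcons P p))%N by rewrite rcont_gt0 // all_rcons p_gt0.
have cR_gt0 := rcont_gt0 pos_R.
have rP_gt0 := rcont_gt0 pos_P.
set cP := rcont (rcons P p) in cP_gt0 *; set cR := rcont (r :: R) in cR_gt0 *.
have cP_neq0 : cP%:R != 0 :> rat by rewrite pnatr_eq0 -lt0n.
have cR_neq0 : cR%:R != 0 :> rat by rewrite pnatr_eq0 -lt0n.
have den_neq0 : ((x * cP + rcont P) * cR + rcont R * cP)%:R != 0 :> rat.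
  by rewrite pnatr_eq0 -lt0n; nia.
move: den_neq0; rewrite !(natrD, natrM) => den_neq0.
by field; rewrite cP_neq0 cR_neq0 den_neq0.
Qed.

Lemma lef_pinv (F : numFieldType) (x y : F) : 0 < x -> x <= y -> y^-1 <= x^-1.
Proof.
by move=> x_gt0 le_xy; rewrite lef_pV2 ?posrE // (lt_le_trans x_gt0).
Qed.

Lemma cf_ge0 (s : seq nat) : 0 <= cf s.
Proof. by elim: s => // t s IH; rewrite cf_cons div1r invr_ge0 addr_ge0. Qed.

Fixpoint alternating (p q : nat) (s : seq nat) : bool :=
  if s is x :: t then (x \in [:: p; p.+1]) && alternating q p t else true.

Lemma alternating_cat (p q : nat) (s1 s2 : seq nat) :
  alternating p q (s1 ++ s2)
    = alternating p q s1
      && (if odd (size s1) then alternating q p s2 else alternating p q s2).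
Proof. by elim: s1 p q => //= x s IH p q; rewrite IH andbA; case: odd. Qed.

Lemma alternating_rev (p q : nat) (s : seq nat) :
  alternating p q (rev s)
    = if odd (size s) then alternating p q s else alternating q p s.
Proof.
elim/last_ind: s p q => // s x IH p q.
rewrite rev_rcons /= IH -cats1 !alternating_cat size_cat addn1 /=.
by case: odd; rewrite /= andbT andbC.
Qed.

Lemma alternating_nth (p q : nat) (s : seq nat) :
  (forall i, (i < size s)%N ->
     nth 0%N s i \in (if odd i then [:: q; q.+1] else [:: p; p.+1])) ->
  alternating p q s.
Proof.
elim: s p q => //= x s IH p q nth_s; rewrite (nth_s 0%N) //=.
by apply: IH => i lt_is; have := nth_s i.+1 lt_is; rewrite /=; case: odd.
Qed.

Lemma mem_succ_bounds (p x : nat) :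
  x \in [:: p; p.+1] -> p%:R <= x%:R :> rat /\ x%:R <= p%:R + 1 :> rat.
Proof. by rewrite !inE => /orP[]/eqP->; rewrite -?natr1; split; lra. Qed.

Lemma cf_alternating_le (p q : nat) (s : seq nat) :
  (0 < p)%N -> alternating p q s -> cf s <= p%:R^-1.
Proof.
move=> p_gt0; case: s => [|x t] /=; first by rewrite invr_ge0.
case/andP=> /mem_succ_bounds[le_px _] _; rewrite div1r.
by apply: lef_pinv; [rewrite ltr0n | have := cf_ge0 t; lra].
Qed.

Lemma alternating_gt0 (p q : nat) (s : seq nat) :
  (0 < p)%N -> (0 < q)%N -> alternating p q s -> all (fun x => 0 < x)%N s.
Proof.
elim: s p q => //= x s IH p q p_gt0 q_gt0 /andP[x_pp /IH-> //].
by move: x_pp; rewrite !inE andbT => /orP[]/eqP->.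
Qed.

Lemma cf_alternating_bounds (p q : nat) (s : seq nat) :
  (0 < p)%N -> (0 < q)%N -> (2 <= size s)%N -> alternating p q s ->
  cf [:: p.+1; q] <= cf s <= cf [:: p; q.+1; p].
Proof.
move=> p_gt0 q_gt0; case: s => [|x1 [|x2 t]] // _.
case/and3P=> /mem_succ_bounds[x1_ge x1_le] /mem_succ_bounds[x2_ge x2_le] alt_t.
have c_ge0 := cf_ge0 t; have c_le := cf_alternating_le p_gt0 alt_t.
rewrite !cf_cons /= !addr0 !div1r -!natr1.
set c := cf t in c_ge0 c_le *.
have p_pos : 0 < p%:R :> rat by rewrite ltr0n.
have q_pos : 0 < q%:R :> rat by rewrite ltr0n.
have pV_pos : 0 < p%:R^-1 :> rat by rewrite invr_gt0.
have x2c_le : (x2%:R + c)^-1 <= q%:R^-1 by apply: lef_pinv => //; lra.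
have x2c_ge : (q%:R + 1 + p%:R^-1)^-1 <= (x2%:R + c)^-1 by apply: lef_pinv; lra.
have x2c_pos : 0 < (q%:R + 1 + p%:R^-1)^-1 :> rat by rewrite invr_gt0; lra.
by apply/andP; split; apply: lef_pinv; lra.
Qed.

Lemma continuant_ratio_bounds (p x : nat) (P R : seq nat) :
  (0 < p)%N -> (0 < x)%N -> (2 <= size P)%N -> (2 <= size R)%N ->
  alternating p x (rev P) -> alternating p x R ->
  1 + 1 / (x%:R + 2 * cf [:: p; x.+1; p])
    <= (continuant (P ++ x.+1 :: R))%:R / (continuant (P ++ x :: R))%:R :> rat
  /\ (continuant (P ++ x.+1 :: R))%:R / (continuant (P ++ x :: R))%:R
    <= 1 + 1 / (x%:R + 2 * cf [:: p.+1; x]) :> rat.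
Proof.
move=> p_gt0 x_gt0 P2 R2 alt_P alt_R.
have pos_P : all (fun y => 0 < y)%N P.
  by rewrite -all_rev (alternating_gt0 p_gt0 x_gt0 alt_P).
have nzP : P != [::] by case: (P) P2.
have nzR : R != [::] by case: (R) R2.
rewrite continuant_ratio ?(alternating_gt0 p_gt0 x_gt0 alt_R) //.
rewrite -size_rev in P2.
have /andP[P_ge P_le] := cf_alternating_bounds p_gt0 x_gt0 P2 alt_P.
have /andP[R_ge R_le] := cf_alternating_bounds p_gt0 x_gt0 R2 alt_R.
have x_pos : 0 < x%:R :> rat by rewrite ltr0n.
have c_ge0 := cf_ge0 [:: p.+1; x].
by rewrite !div1r !lerD2l; split; apply: lef_pinv; lra.
Qed.

Theorem lemma11 (a b : nat) (A : seq nat) :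
  (0 < a)%N -> (0 < b)%N ->
  (forall i, (i < size A)%N -> ~~ odd i -> nth 0%N A i \in [:: a; a.+1]) ->
  (forall i, (i < size A)%N -> odd i -> nth 0%N A i \in [:: b; b.+1]) ->
  (forall P R : seq nat, A = P ++ a :: R -> ~~ odd (size P) ->
     (2 <= size P)%N -> (2 <= size R)%N ->
     1 + 1 / (a%:R + 2 * c1_aa1b a b)
       <= (continuant (P ++ a.+1 :: R))%:R / (continuant (P ++ a :: R))%:R :> rat
     /\ (continuant (P ++ a.+1 :: R))%:R / (continuant (P ++ a :: R))%:R
       <= 1 + 1 / (a%:R + 2 * c2_aa1b a b) :> rat)
  /\
  (forall P1 R1 : seq nat, A = P1 ++ b :: R1 -> odd (size P1) ->
     (2 <= size P1)%N -> (2 <= size R1)%N ->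
     1 + 1 / (b%:R + 2 * c1_abb1 a b)
       <= (continuant (P1 ++ b.+1 :: R1))%:R / (continuant (P1 ++ b :: R1))%:R :> rat
     /\ (continuant (P1 ++ b.+1 :: R1))%:R / (continuant (P1 ++ b :: R1))%:R
       <= 1 + 1 / (b%:R + 2 * c2_abb1 a b) :> rat).
Proof.
move=> a_gt0 b_gt0 even_A odd_A.
have alt_A : alternating a b A.
  by apply: alternating_nth => i lt_iA; case: ifPn; [apply: odd_A | apply: even_A].
split=> P R def_A par_P P2 R2; move: alt_A;
  rewrite def_A alternating_cat ?(negbTE par_P) ?par_P => /and3P[alt_P _ alt_R].
- by apply: continuant_ratio_bounds; rewrite ?alternating_rev ?(negbTE par_P).
- by apply: continuant_ratio_bounds; rewrite ?alternating_rev ?par_P.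
Qed.
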